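(* If $\eta$ is a probability measure, then $\tau(K)\le\eta(K)$ for every closed set $K\subset\mathbb{X}$.
   Context: $\mathbb{X}$ is a compact metric space. $(\xi_j)_{j\in\mathbb N}$ is a sequence of finitely additive outer probabilities on $\mathbb{X}$ (set functions on all subsets, values in $[0,1]$, finitely additive, $\xi_j(\mathbb{X})=1$). For $A\subset\mathbb{X}$, $\tau(A)=\limsup_{n\to\infty}\frac1n\sum_{j=0}^{n-1}\xi_j(A)$. For $Y\subset\mathbb{X}$, $r>0$, $\nu_r(Y)=\inf\sum_{I\in\mathcal I}\tau(I)$ over countable covers $\mathcal I$ of $Y$ by open sets of diameter $\le r$; $\nu(Y)=\sup_{r>0}\nu_r(Y)$; $\eta$ is the restriction of $\nu$ to Borel sets. *)

From HB Require Import structures.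
From mathcomp Require Import all_boot all_order all_algebra.
From mathcomp Require Import all_classical all_reals all_analysis.
Set Implicit Arguments. Unset Strict Implicit. Unset Printing Implicit Defensive.
Import Order.TTheory GRing.Theory Num.Theory.
Local Open Scope classical_set_scope.
Local Open Scope ring_scope.

Section Defs.
Context {R : realType} {X : metricType R}.

Definition fa_outer_prob (xi : set X -> R) : Prop :=
  [/\ (forall A, 0 <= xi A <= 1),
      (forall A B, A `&` B = set0 -> xi (A `|` B) = xi A + xi B)
    & xi setT = 1].

Definition tau (xi : nat -> set X -> R) (A : set X) : \bar R :=
  limn_esup (fun n => ((n%:R)^-1 * \sum_(j < n) xi j A)%:E).

Definition diam (A : set X) : \bar R :=
  ereal_sup [set (mdist x y)%:E | x in A & y in A].

Definition admissible_cover (r : R) (Y : set X) (I : nat -> set X) : Prop :=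
  (forall k, open (I k) /\ (diam (I k) <= r%:E)%E) /\ Y `<=` \bigcup_k I k.

Definition nu_r (xi : nat -> set X -> R) (r : R) (Y : set X) : \bar R :=
  ereal_inf [set (\sum_(0 <= k <oo) tau xi (I k))%E | I in admissible_cover r Y].

Definition nu (xi : nat -> set X -> R) (Y : set X) : \bar R :=
  ereal_sup [set nu_r xi r Y | r in [set r : R | 0 < r]].

Definition borel_sets : set (set X) := <<s open >>.

Definition is_probability_on (B : set (set X)) (mu : set X -> \bar R) : Prop :=
  [/\ mu set0 = 0%E,
      (forall A, B A -> (0 <= mu A)%E),
      (forall F : nat -> set X, (forall n, B (F n)) -> trivIset setT F ->
          mu (\bigcup_n F n) = (\sum_(0 <= n <oo) mu (F n))%E)
    & mu setT = 1%E].

End Defs.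

(* Every cover admissible in the definition of nu_r K is a countable open cover
   of the compact set K, so finitely many of its members already cover K.
   tau is monotone and finitely subadditive, being a limsup of averages of
   finitely additive set functions, hence tau K is bounded by the finite sum of
   the tau-values of those members, a fortiori by the whole series. Thus
   tau K <= nu_r K for every r, and so tau K <= nu K. *)
From HB Require Import structures.
From mathcomp Require Import all_boot all_order all_algebra.
From mathcomp Require Import all_classical all_reals all_analysis.
Import Order.TTheory GRing.Theory Num.Theory.
Local Open Scope classical_set_scope.
Local Open Scope ring_scope.

Section limn_esup_order.
Context {R : realType}.
Implicit Types u v : (\bar R)^nat.
Local Open Scope ereal_scope.

Lemma le_limn_esup u v : (forall n, u n <= v n) -> limn_esup u <= limn_esup v.
Proof.
move=> uv; rewrite !limn_esup_lim.
apply: lee_lim; [exact: is_cvg_esups|exact: is_cvg_esups|].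
apply: nearW => n; apply: ge_ereal_sup => _ [k /= nk <-].
by apply: le_trans (uv k) _; apply: ereal_sup_ubound; exists k.
Qed.

Lemma esups_ge0 u : (forall n, 0 <= u n) -> forall n, 0 <= esups u n.
Proof.
by move=> u0 n; apply: le_trans (u0 n) _; apply: ereal_sup_ubound; exists n => /=.
Qed.

Lemma limn_esup_ge0 u : (forall n, 0 <= u n) -> 0 <= limn_esup u.
Proof.
move=> u0; rewrite limn_esup_lim; apply: lime_ge; first exact: is_cvg_esups.
exact/nearW/esups_ge0.
Qed.

Lemma limn_esupD_le u v : (forall n, 0 <= u n) -> (forall n, 0 <= v n) ->
  limn_esup (u \+ v) <= limn_esup u + limn_esup v.
Proof.
move=> u0 v0; rewrite !limn_esup_lim.
have esupsD_le n : esups (u \+ v) n <= (esups u \+ esups v) n.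
  apply: ge_ereal_sup => _ [k /= nk <-].
  by apply: leeD; apply: ereal_sup_ubound; exists k.
have limsD_def : limn (esups u) +? limn (esups v).
  by apply: ge0_adde_def; rewrite inE; apply: lime_ge;
    [exact: is_cvg_esups|exact/nearW/esups_ge0|
     exact: is_cvg_esups|exact/nearW/esups_ge0].
rewrite -limeD; [|exact: is_cvg_esups|exact: is_cvg_esups|done].
apply: lee_lim; [exact: is_cvg_esups| |exact: nearW].
by apply: is_cvgeD => //; exact: is_cvg_esups.
Qed.

Lemma limn_esup_sum_le (u : nat -> (\bar R)^nat) N :
  (forall k n, 0 <= u k n) ->
  limn_esup (fun n => \sum_(k < N) u k n) <= \sum_(k < N) limn_esup (u k).
Proof.
move=> u0; elim: N => [|N IH].
  by under eq_fun do rewrite big_ord0; rewrite big_ord0 (cvg_limn_einf_sup (cvg_cst 0)).2.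
have sum_ge0 n : 0 <= \sum_(k < N) u k n by apply: sume_ge0.
under eq_fun do rewrite big_ord_recr /=.
rewrite big_ord_recr /=.
apply: le_trans (limn_esupD_le _ _ sum_ge0 (u0 N)) _.
exact: leeD.
Qed.

End limn_esup_order.

Section finitely_additive.
Context {T : Type} {R : numDomainType} {mu : set T -> R}.
Hypothesis mu_ge0 : forall A, 0 <= mu A.
Hypothesis mu_additive : forall A B, A `&` B = set0 -> mu (A `|` B) = mu A + mu B.

Lemma fa_set0 : mu set0 = 0.
Proof. by apply: (@addrI _ (mu set0)); rewrite addr0 -mu_additive ?setU0 // setI0. Qed.

Lemma le_fa A B : A `<=` B -> mu A <= mu B.
Proof.
by move=> AB; rewrite -(setDUK AB) mu_additive ?setDIK // lerDl.
Qed.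

Lemma fa_subadditive A B : mu (A `|` B) <= mu A + mu B.
Proof.
rewrite -(setDUK (@subsetUl _ A B)) mu_additive ?setDIK // lerD2l le_fa //.
by move=> x [[]].
Qed.

Lemma fa_bigsetU_le (F : nat -> set T) N :
  mu (\big[setU/set0]_(k < N) F k) <= \sum_(k < N) mu (F k).
Proof.
elim: N => [|N IH]; first by rewrite !big_ord0 fa_set0.
rewrite !big_ord_recr /=; apply: le_trans (fa_subadditive _ _) _.
by rewrite lerD2r.
Qed.

End finitely_additive.

Section tau_subadditive.
Context {R : realType} {X : metricType R} {xi : nat -> set X -> R}.
Hypothesis xi_fa : forall j, fa_outer_prob (xi j).

Let xi_ge0 j A : 0 <= xi j A.
Proof. by have [/(_ A)/andP[]] := xi_fa j. Qed.

Let xi_additive j A B : A `&` B = set0 -> xi j (A `|` B) = xi j A + xi j B.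
Proof. by have [_ + _] := xi_fa j; apply. Qed.

Let average A n : \bar R := ((n%:R)^-1 * \sum_(j < n) xi j A)%:E.

Let average_ge0 A n : (0 <= average A n)%E.
Proof. by rewrite lee_fin mulr_ge0 ?invr_ge0 ?sumr_ge0. Qed.

Lemma tau_ge0 A : (0 <= tau xi A)%E.
Proof. exact/limn_esup_ge0/average_ge0. Qed.

Lemma le_tau A B : A `<=` B -> (tau xi A <= tau xi B)%E.
Proof.
move=> AB; apply: le_limn_esup => n; rewrite lee_fin ler_wpM2l ?invr_ge0 //.
by apply: ler_sum => j _; exact: le_fa (xi_ge0 j) (xi_additive j) _ _ AB.
Qed.

Lemma tau_bigsetU_le (F : nat -> set X) N :
  (tau xi (\big[setU/set0]_(k < N) F k) <= \sum_(k < N) tau xi (F k))%E.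
Proof.
apply: le_trans (limn_esup_sum_le _ N (fun k => average_ge0 (F k))).
apply: le_limn_esup => n; rewrite /average /= sumEFin lee_fin -mulr_sumr exchange_big /=.
rewrite ler_wpM2l ?invr_ge0 //; apply: ler_sum => j _.
exact: (fa_bigsetU_le (xi_ge0 j) (xi_additive j) F N).
Qed.

End tau_subadditive.

Lemma compact_countable_open_cover {T : topologicalType} (K : set T)
    (I : nat -> set T) :
  compact K -> (forall k, open (I k)) -> K `<=` \bigcup_k I k ->
  exists N, K `<=` \big[setU/set0]_(k < N) I k.
Proof.
move=> /compact_near_coveringP cK Iop KI.
have [N _ KIN] : \forall N \near \oo, K `<=` \bigcup_(k < N) I k.
  apply: cK => x /KI [k _ Ikx].
  exists (I k, [set n | (k < n)%N]) => /=.
    by split; [exact/open_nbhs_nbhs|exists k.+1].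
  by move=> [y n] /= [Iky kn]; exists k.
by exists N; rewrite -bigcup_mkord; apply: KIN => /=.
Qed.

Lemma tau_le_nu_r {R : realType} {X : metricType R} (xi : nat -> set X -> R)
    (r : R) (K : set X) :
  (forall j, fa_outer_prob (xi j)) -> compact K -> (tau xi K <= nu_r xi r K)%E.
Proof.
move=> xi_fa cK; apply: le_ereal_inf_tmp => _ [I [Iop KI] <-].
have [N KIN] := compact_countable_open_cover _ _ cK (fun k => (Iop k).1) KI.
apply: le_trans (le_tau xi_fa _ _ KIN) _.
apply: le_trans (tau_bigsetU_le xi_fa I N) _.
rewrite -(big_mkord xpredT (fun k => tau xi (I k))); apply: nneseries_lim_ge => k _ _.
exact: tau_ge0.
Qed.

Theorem mainTheorem15 (R : realType) (X : metricType R)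
    (xi : nat -> set X -> R) :
  compact [set: X] ->
  (forall j, fa_outer_prob (xi j)) ->
  is_probability_on borel_sets (nu xi) ->
  forall K : set X, closed K -> (tau xi K <= nu xi K)%E.
Proof.
move=> cX xi_fa _ K cK.
have cptK : compact K by exact: subclosed_compact cK cX _.
apply: le_trans (tau_le_nu_r _ 1 _ xi_fa cptK) _.
by apply: ereal_sup_ubound; exists 1 => /=.
Qed.
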